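(* Let $\mathcal A$ be a finite, union-closed, separating family of sets whose universe $U(\mathcal A)=\bigcup_{A\in\mathcal A}A$ has $m\geq 1$ elements, and suppose $|\mathcal A|\leq 2m$. Then there is an element $x\in U(\mathcal A)$ contained in at least $\tfrac12|\mathcal A|$ member-sets of $\mathcal A$.
   Context: $\mathcal A$ is union-closed if $A\cup B\in\mathcal A$ for all $A,B\in\mathcal A$. $\mathcal A$ is separating if for any two distinct elements $x,y\in U(\mathcal A)$ there is $A\in\mathcal A$ containing exactly one of $x,y$. *)

From mathcomp Require Import all_boot.
Set Implicit Arguments. Unset Strict Implicit. Unset Printing Implicit Defensive.

(* A finite family of finite sets is modelled as F : {set {set T}} over a
   finite ground type T; only the universe U(F) matters. *)
Definition universe (T : finType) (F : {set {set T}}) : {set T} :=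
  \bigcup_(A in F) A.

Definition union_closed (T : finType) (F : {set {set T}}) : Prop :=
  forall A B, A \in F -> B \in F -> A :|: B \in F.

Definition separating (T : finType) (F : {set {set T}}) : Prop :=
  forall x y, x \in universe F -> y \in universe F -> x != y ->
    exists2 A, A \in F & (x \in A) != (y \in A).

Definition freq (T : finType) (F : {set {set T}}) (x : T) : nat :=
  #|[set A in F | x \in A]|.

From mathcomp Require Import all_boot.

(* For y in the universe, let M y be the largest member of F avoiding y (the
   union of all members avoiding y). Separation makes y |-> M y injective.
   Choose x with |M x| minimal: for y <> x, if x were outside M y then
   M y \subset M x, so M y = M x by minimality, hence y = x. Thus the sets
   M y (y <> x) together with U(F) itself are m distinct members containing x,
   and m >= |F|/2. If some y lies in every member, y itself has frequency |F|. *)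

Set Implicit Arguments. Unset Strict Implicit. Unset Printing Implicit Defensive.

Section UnionClosed.
Variables (T : finType) (F : {set {set T}}).
Hypothesis ucF : union_closed F.

Lemma union_closed_bigcup (P : pred {set T}) A0 :
  A0 \in F -> P A0 -> \bigcup_(A in F | P A) A \in F.
Proof.
move=> A0F PA0.
have -> : \bigcup_(A in F | P A) A = A0 :|: \bigcup_(A in F | P A) A.
  by apply/esym/setUidPr/(bigcup_sup A0); rewrite A0F.
apply: (big_ind (fun X => A0 :|: X \in F)) => [|X Y FX FY|A /andP[AF _]].
- by rewrite setU0.
- by rewrite -[A0 in A0 :|: _]setUid -setUACA; apply: ucF.
- exact: ucF.
Qed.

Lemma universe_mem A0 : A0 \in F -> universe F \in F.
Proof.
move=> A0F; rewrite /universe -(eq_bigl _ _ (fun A => andbT (A \in F))).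
exact: (@union_closed_bigcup predT A0).
Qed.

Definition max_avoiding (y : T) : {set T} := \bigcup_(A in F | y \notin A) A.

Lemma notin_max_avoiding y : y \notin max_avoiding y.
Proof. by apply/bigcupP => -[A /andP[_ /negPf ->]]. Qed.

Lemma sub_max_avoiding y A : A \in F -> y \notin A -> A \subset max_avoiding y.
Proof. by move=> AF yA; apply: bigcup_sup; rewrite AF. Qed.

Lemma max_avoiding_mem y A : A \in F -> y \notin A -> max_avoiding y \in F.
Proof. exact: union_closed_bigcup. Qed.

Lemma max_avoiding_neq_universe y :
  y \in universe F -> max_avoiding y != universe F.
Proof. by move=> yU; apply: contraTneq yU => <-; apply: notin_max_avoiding. Qed.

Hypothesis sepF : separating F.

Lemma max_avoiding_inj : {in universe F &, injective max_avoiding}.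
Proof.
move=> y z yU zU eM; apply/eqP; apply: contraTT isT => neq_yz.
have [A AF] := sepF yU zU neq_yz.
case yA: (y \in A); case zA: (z \in A) => // _.
- have := subsetP (sub_max_avoiding AF (negbT zA)) y yA.
  by rewrite -eM (negbTE (notin_max_avoiding y)).
- have := subsetP (sub_max_avoiding AF (negbT yA)) z zA.
  by rewrite eM (negbTE (notin_max_avoiding z)).
Qed.

Section MinimalAvoider.
Variable x : T.
Hypothesis xU : x \in universe F.
Hypothesis avoided : forall y, y \in universe F -> exists2 A, A \in F & y \notin A.
Hypothesis x_min :
  forall y, y \in universe F -> #|max_avoiding x| <= #|max_avoiding y|.

Lemma max_avoiding_universe_mem y :
  y \in universe F -> max_avoiding y \in F.
Proof. by move=> /avoided[A AF yA]; apply: max_avoiding_mem AF yA. Qed.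

Lemma in_max_avoiding y :
  y \in universe F -> y != x -> x \in max_avoiding y.
Proof.
move=> yU neq_yx; apply: contraNT neq_yx => xM; apply/eqP/max_avoiding_inj => //.
apply/eqP; rewrite eqEcard x_min // andbT.
exact: sub_max_avoiding (max_avoiding_universe_mem yU) xM.
Qed.

Lemma card_universe_le_freq : #|universe F| <= freq F x.
Proof.
pose f y := if y == x then universe F else max_avoiding y.
have f_inj : {in universe F &, injective f}.
  move=> y z yU zU; rewrite /f.
  case: eqP => [->|_]; case: eqP => [->|_] // e.
  - by move: (max_avoiding_neq_universe zU); rewrite -e eqxx.
  - by move: (max_avoiding_neq_universe yU); rewrite e eqxx.
  - exact: max_avoiding_inj.
rewrite -(card_in_imset f_inj); apply/subset_leq_card/subsetP.
move=> _ /imsetP[y yU ->]; rewrite inE /f.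
case: eqP => [_|/eqP neq_yx]; last first.
  by rewrite max_avoiding_universe_mem ?in_max_avoiding.
have [A AF _] := avoided xU.
by rewrite (universe_mem AF).
Qed.

End MinimalAvoider.
End UnionClosed.

Lemma freq_full (T : finType) (F : {set {set T}}) y :
  (forall A, A \in F -> y \in A) -> freq F y = #|F|.
Proof.
move=> yF; rewrite /freq; apply: eq_card => A.
by rewrite inE andb_idr //; apply: yF.
Qed.

Theorem mainTheorem2 (T : finType) (F : {set {set T}}) (m : nat) :
  union_closed F -> separating F ->
  #|universe F| = m -> 1 <= m -> #|F| <= 2 * m ->
  exists2 x, x \in universe F & #|F| <= 2 * freq F x.
Proof.
move=> ucF sepF cardU m_gt0 cardF.
have [x0 x0U] : exists x0, x0 \in universe F.
  by apply/set0Pn; rewrite -card_gt0 cardU.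
have [/exists_inP[y yU /forall_inP yF] | noFull] :=
  boolP [exists y in universe F, [forall A in F, y \in A]].
  by exists y; rewrite // freq_full // leq_pmull.
have avoided y : y \in universe F -> exists2 A, A \in F & y \notin A.
  move=> yU; apply/exists_inP; rewrite -negb_forall_in.
  by apply: contraNN noFull => yF; apply/exists_inP; exists y.
have [x xU x_min] := arg_minnP (fun y => #|max_avoiding F y|) x0U.
exists x => //; apply: (leq_trans cardF); rewrite leq_mul2l -cardU.
exact: card_universe_le_freq.
Qed.
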